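(* Let $\mathbb{F}\in\{\mathbb{R},\mathbb{C}\}$, $A\in\mathbb{F}^{m\times n}$ with $\|A\|_{\infty,col}\le1$, $\mu>0$, $x_0\in\mathbb{F}^n$ with $S=\mathrm{supp}\,x_0$ and $\#S=K$, $\epsilon\in\mathbb{F}^m$, $b=Ax_0+\epsilon$, and assume $\beta_K>0$. If $\|\epsilon\|_2<\sqrt{\mu}$ and $$|x_{0,j}|>\sqrt{\mu}+\frac{\|\epsilon\|_2}{\beta_K}\quad\text{for all }j\in S,$$ then the oracle solution $x'=x_S$ is a strict local minimizer of $\mathcal{K}_{reg}$ with $\mathrm{supp}(x')=\mathrm{supp}(x_0)$. Moreover $|x'_j|>\sqrt{\mu}$ for $j\in S$, $\|Ax'-b\|_2\le\|\epsilon\|_2$, and $\|x'-x_0\|_2\le\|\epsilon\|_2/\beta_K$.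
   Context: $\|A\|_{\infty,col}=\max_i\|a_i\|_2$ over the columns $a_i$ of $A$. $\mathrm{card}(x)$ is the number of nonzero entries; $\beta_k=\inf\{\|Ax\|_2/\|x\|_2:x\ne0,\ \mathrm{card}(x)\le k\}$. $\mathcal{K}_{reg}(x)=\mathcal{Q}_2(\mu\,\mathrm{card})(x)+\|Ax-b\|_2^2$ with $\mathcal{Q}_2(\mu\,\mathrm{card})(x)=\sum_{j=1}^n\big(\mu-(\max\{\sqrt{\mu}-|x_j|,0\})^2\big)$. $A_S$ denotes $A$ with all columns with index outside $S$ set to zero, and the oracle solution is $x_S=(A_S^*A_S)^\dagger A_S^*b$ (the least squares solution of $A_Sx=b$ supported in $S$), where $\dagger$ is the Moore–Penrose inverse and $A^*$ the conjugate transpose. *)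

From mathcomp Require Import all_boot all_order all_algebra.
From mathcomp Require Import classical_sets reals.
From mathcomp Require Export complex.
Set Implicit Arguments. Unset Strict Implicit. Unset Printing Implicit Defensive.
Import Order.TTheory GRing.Theory Num.Theory.
Local Open Scope ring_scope.

(* Generic setting: the real numbers R (a realType) and a scalar field F
   (F = R or F = R[i]) equipped with its conjugation [conj] and its modulus
   [md : F -> R]. *)
Section Generic.
Variables (R : realType) (F : fieldType) (conj : F -> F) (md : F -> R).

Definition vnorm2 k (v : 'cV[F]_k) : R := Num.sqrt (\sum_i md (v i 0) ^+ 2).

Definition colnorm_le1 m n (A : 'M[F]_(m, n)) : Prop :=
  forall j : 'I_n, Num.sqrt (\sum_i md (A i j) ^+ 2) <= 1.

Definition supp n (x : 'cV[F]_n) : {set 'I_n} := [set j | x j 0 != 0].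
Definition card n (x : 'cV[F]_n) : nat := #|supp x|.

Definition beta m n (A : 'M[F]_(m, n)) (k : nat) : R :=
  inf [set r : R | exists x : 'cV[F]_n,
         [/\ x != 0, (card x <= k)%N & r = vnorm2 (A *m x) / vnorm2 x]].

Definition Q2card n (mu : R) (x : 'cV[F]_n) : R :=
  \sum_j (mu - (Num.max (Num.sqrt mu - md (x j 0)) 0) ^+ 2).

Definition Kreg m n (A : 'M[F]_(m, n)) (b : 'cV[F]_m) (mu : R) (x : 'cV[F]_n) : R :=
  Q2card mu x + vnorm2 (A *m x - b) ^+ 2.

Definition restrict_cols m n (A : 'M[F]_(m, n)) (S : {set 'I_n}) : 'M[F]_(m, n) :=
  \matrix_(i, j) (if j \in S then A i j else 0).

Definition adjoint m n (M : 'M[F]_(m, n)) : 'M[F]_(n, m) := (map_mx conj M)^T.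

(* X is the Moore--Penrose inverse of M (the four Penrose equations;
   these determine X uniquely). *)
Definition is_MP_inverse m n (M : 'M[F]_(m, n)) (X : 'M[F]_(n, m)) : Prop :=
  [/\ M *m X *m M = M, X *m M *m X = X,
      adjoint (M *m X) = M *m X & adjoint (X *m M) = X *m M].

Definition strict_local_min n (f : 'cV[F]_n -> R) (x : 'cV[F]_n) : Prop :=
  exists2 delta : R, 0 < delta &
    forall y : 'cV[F]_n, y != x -> vnorm2 (y - x) < delta -> f x < f y.

(* Proposition 4.6, over the scalar field F. [X] is the Moore--Penrose
   inverse of A_S^* A_S, so that X A_S^* b = (A_S^* A_S)^dagger A_S^* b = x_S. *)
Definition prop46 : Prop :=
  forall (m n : nat) (A : 'M[F]_(m, n)) (mu : R) (x0 : 'cV[F]_n)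
         (eps b : 'cV[F]_m) (X : 'M[F]_n),
    colnorm_le1 A ->
    0 < mu ->
    b = A *m x0 + eps ->
    let S := supp x0 in
    let K := #|S| in
    0 < beta A K ->
    vnorm2 eps < Num.sqrt mu ->
    (forall j, j \in S -> md (x0 j 0) > Num.sqrt mu + vnorm2 eps / beta A K) ->
    let AS := restrict_cols A S in
    is_MP_inverse (adjoint AS *m AS) X ->
    let x' := X *m adjoint AS *m b in
    [/\ strict_local_min (Kreg A b mu) x',
        supp x' = supp x0,
        (forall j, j \in S -> md (x' j 0) > Num.sqrt mu),
        vnorm2 (A *m x' - b) <= vnorm2 eps
      & vnorm2 (x' - x0) <= vnorm2 eps / beta A K].

End Generic.

From Pilot Require Import Defs.
From mathcomp Require Import all_boot all_order all_algebra.
From mathcomp Require Import classical_sets reals complex.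
From mathcomp Require Import ring lra.
Set Implicit Arguments. Unset Strict Implicit. Unset Printing Implicit Defensive.
Import Order.TTheory GRing.Theory Num.Theory.
Local Open Scope ring_scope.

(* The oracle solution x' solves the normal equations A_S^* (A_S x' - b) = 0, so
   the residual r = A x' - b is orthogonal to A h for every h supported in S, and
   Pythagoras gives ||eps||^2 = ||r||^2 + ||A (x0 - x')||^2.  This bounds ||r|| and,
   through beta_K, ||x' - x0||; hence |x'_j| > sqrt mu on S.
   For strict local minimality write y = x' + h with h small and let T be the l1
   norm of h outside S.  On S both x' and y stay where the penalty is flat; outside
   S the penalty grows by at least (2 sqrt mu - ||h||) T, while the data term
   ||r + A h||^2 loses at most 2 ||eps|| T (unit columns and Cauchy-Schwarz).  So
   K(y) - K(x') >= T (2 (sqrt mu - ||eps||) - ||h||) + ||A h||^2 > 0: either T > 0,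
   or h is supported in S and ||A h|| >= beta_K ||h|| > 0. *)

Lemma sqr_sum_mul_le (R : realFieldType) (I : finType) (a b : I -> R) :
  (\sum_i a i * b i) ^+ 2 <= (\sum_i a i ^+ 2) * (\sum_i b i ^+ 2).
Proof.
set A := \sum_i a i ^+ 2; set B := \sum_i b i ^+ 2; set C := \sum_i a i * b i.
have A_ge0 : 0 <= A by apply: sumr_ge0 => i _; apply: sqr_ge0.
have B_ge0 : 0 <= B by apply: sumr_ge0 => i _; apply: sqr_ge0.
have [A0|A_neq0] := eqVneq A 0.
  have a0 i : a i = 0.
    apply/eqP; rewrite -sqrf_eq0; apply/eqP.
    by apply: (psumr_eq0P _ A0) => // j _; apply: sqr_ge0.
  by rewrite /C big1 ?expr0n ?mulr_ge0 // => i _; rewrite a0 mul0r.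
(* expand [0 <= sum_i (C a_i - A b_i)^2] and divide by [A > 0] *)
have : 0 <= \sum_i (C * a i - A * b i) ^+ 2 by apply: sumr_ge0 => i _; apply: sqr_ge0.
rewrite (eq_bigr (fun i => C ^+ 2 * a i ^+ 2 - (C * A *+ 2) * (a i * b i)
   + A ^+ 2 * b i ^+ 2)); last by move=> i _; ring.
rewrite big_split sumrB /= -!mulr_sumr -/A -/B -/C => sum_ge0.
have A_gt0 : 0 < A by rewrite lt0r A_neq0.
nra.
Qed.

Definition Q2pen (R : rcfType) (mu t : R) : R :=
  mu - (Num.max (Num.sqrt mu - t) 0) ^+ 2.

Lemma Q2pen_sat (R : rcfType) (mu t : R) : Num.sqrt mu <= t -> Q2pen mu t = mu.
Proof. by move=> le_st; rewrite /Q2pen max_r ?subr_le0 // expr0n subr0. Qed.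

Lemma Q2pen0 (R : rcfType) (mu : R) : 0 <= mu -> Q2pen mu 0 = 0.
Proof.
by move=> mu_ge0; rewrite /Q2pen subr0 max_l ?sqrtr_ge0 // sqr_sqrtr // subrr.
Qed.

Lemma Q2pen_ge (R : rcfType) (mu t : R) : 0 <= mu -> 0 <= t ->
  Num.sqrt mu *+ 2 * t - t ^+ 2 <= Q2pen mu t.
Proof.
move=> mu_ge0 t_ge0; have s_ge0 := sqrtr_ge0 mu; have s_sqr := sqr_sqrtr mu_ge0.
by rewrite /Q2pen; have [|] := leP (Num.sqrt mu - t) 0; nra.
Qed.

(* [F] stands for R or R[i]: [conj] is its conjugation, [md] its modulus, [ofR] the
   embedding of R and [re2 x] twice the real part of [x]. *)
Section Scalars.
Variables (R : realType) (F : fieldType) (conj : F -> F) (md : F -> R)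
  (ofR : R -> F) (re2 : F -> R).
Hypothesis conjD : {morph conj : x y / x + y}.
Hypothesis conjM : {morph conj : x y / x * y}.
Hypothesis conjK : involutive conj.
Hypothesis ofRD : {morph ofR : a b / a + b}.
Hypothesis ofR_inj : injective ofR.
Hypothesis mulf_conj : forall x, x * conj x = ofR (md x ^+ 2).
Hypothesis md_ge0 : forall x, 0 <= md x.
Hypothesis mdM : {morph md : x y / x * y}.
Hypothesis md_triangle : forall x y, md (x + y) <= md x + md y.
Hypothesis addf_conj : forall x, x + conj x = ofR (re2 x).
Hypothesis re2_le : forall x, `|re2 x| <= md x *+ 2.

Lemma conj0 : conj 0 = 0.
Proof. by apply: (@addrI _ (conj 0)); rewrite -conjD !addr0. Qed.

Lemma conjN x : conj (- x) = - conj x.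
Proof. by apply: (@addrI _ (conj x)); rewrite -conjD !subrr conj0. Qed.

Lemma ofR0 : ofR 0 = 0.
Proof. by apply: (@addrI _ (ofR 0)); rewrite -ofRD !addr0. Qed.

Lemma md_eq0 x : (md x == 0) = (x == 0).
Proof.
apply/eqP/eqP => [mdx0|->].
  have /eqP : x * conj x = 0 by rewrite mulf_conj mdx0 expr0n /= ofR0.
  rewrite mulf_eq0 => /orP[/eqP //|/eqP cx0].
  by rewrite -[x]conjK cx0 conj0.
apply/eqP; rewrite -sqrf_eq0; apply/eqP/ofR_inj.
by rewrite -mulf_conj mul0r ofR0.
Qed.

Lemma md0 : md 0 = 0.
Proof. by apply/eqP; rewrite md_eq0. Qed.

Lemma md_sqr_inj x y : md x ^+ 2 = md y ^+ 2 -> md x = md y.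
Proof. by move/eqP; rewrite eqrXn2 // => /eqP. Qed.

Lemma mdJ x : md (conj x) = md x.
Proof. by apply/md_sqr_inj/ofR_inj; rewrite -!mulf_conj conjK mulrC. Qed.

Lemma mdN x : md (- x) = md x.
Proof. by apply/md_sqr_inj/ofR_inj; rewrite -!mulf_conj conjN mulrNN. Qed.

Lemma re2_0 : re2 0 = 0.
Proof. by apply: ofR_inj; rewrite -addf_conj conj0 addr0 ofR0. Qed.

Lemma md_sum I (r : seq I) (P : pred I) (f : I -> F) :
  md (\sum_(i <- r | P i) f i) <= \sum_(i <- r | P i) md (f i).
Proof.
elim/big_ind2: _ => [|x1 y1 x2 y2 le1 le2|//]; first by rewrite md0.
exact: le_trans (md_triangle _ _) (lerD le1 le2).
Qed.

Local Notation norm2 := (vnorm2 md).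
Local Notation adj := (adjoint conj).

Definition sqnorm k (v : 'cV[F]_k) : R := \sum_i md (v i 0) ^+ 2.
Definition dot k (u w : 'cV[F]_k) : F := \sum_i conj (u i 0) * w i 0.

Lemma sqnorm_ge0 k (v : 'cV[F]_k) : 0 <= sqnorm v.
Proof. by apply: sumr_ge0 => i _; apply: sqr_ge0. Qed.

Lemma norm2_ge0 k (v : 'cV[F]_k) : 0 <= norm2 v.
Proof. exact: sqrtr_ge0. Qed.

Lemma norm2_sqr k (v : 'cV[F]_k) : norm2 v ^+ 2 = sqnorm v.
Proof. by rewrite sqr_sqrtr // sqnorm_ge0. Qed.

Lemma dotvv k (v : 'cV[F]_k) : dot v v = ofR (sqnorm v).
Proof.
rewrite /dot /sqnorm (big_morph ofR ofRD ofR0).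
by apply: eq_bigr => i _; rewrite mulrC mulf_conj.
Qed.

Lemma conj_dot k (u w : 'cV[F]_k) : conj (dot u w) = dot w u.
Proof.
rewrite /dot (big_morph conj conjD conj0).
by apply: eq_bigr => i _; rewrite conjM conjK mulrC.
Qed.

Lemma dotDl k (u v w : 'cV[F]_k) : dot (u + v) w = dot u w + dot v w.
Proof. by rewrite /dot -big_split; apply: eq_bigr => i _; rewrite mxE conjD mulrDl. Qed.

Lemma dotDr k (u v w : 'cV[F]_k) : dot w (u + v) = dot w u + dot w v.
Proof. by rewrite /dot -big_split; apply: eq_bigr => i _; rewrite mxE mulrDr. Qed.

Lemma dot0l k (w : 'cV[F]_k) : dot 0 w = 0.
Proof. by rewrite /dot big1 // => i _; rewrite mxE conj0 ?mul0r. Qed.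

Lemma sqnormD k (u w : 'cV[F]_k) :
  sqnorm (u + w) = sqnorm u + sqnorm w + re2 (dot u w).
Proof.
by apply: ofR_inj; rewrite !ofRD -!dotvv -addf_conj conj_dot dotDl !dotDr; ring.
Qed.

Lemma norm2_le k l (u : 'cV[F]_k) (v : 'cV[F]_l) :
  (norm2 u <= norm2 v) = (sqnorm u <= sqnorm v).
Proof. exact: ler_sqrt (sqnorm_ge0 v). Qed.

Lemma sqnormN k (v : 'cV[F]_k) : sqnorm (- v) = sqnorm v.
Proof. by apply: eq_bigr => i _; rewrite mxE mdN. Qed.

Lemma norm2N k (v : 'cV[F]_k) : norm2 (- v) = norm2 v.
Proof. by rewrite /vnorm2 -/(sqnorm _) sqnormN. Qed.

Lemma norm_dot_le k (u w : 'cV[F]_k) : md (dot u w) <= norm2 u * norm2 w.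
Proof.
apply: le_trans (md_sum _ _ _) _.
under eq_bigr do rewrite mdM mdJ.
rewrite -sqrtrM ?sqnorm_ge0 //; apply: le_trans (ler_norm _) _.
by rewrite -sqrtr_sqr ler_sqrt ?mulr_ge0 ?sqnorm_ge0 //; apply: sqr_sum_mul_le.
Qed.

Lemma norm2D k (u w : 'cV[F]_k) : norm2 (u + w) <= norm2 u + norm2 w.
Proof.
rewrite -[norm2 u + _]ger0_norm ?addr_ge0 ?norm2_ge0 // -sqrtr_sqr.
rewrite ler_sqrt ?sqr_ge0 // -[X in X <= _]/(sqnorm (u + w)) sqnormD sqrrD.
rewrite !norm2_sqr.
have := re2_le (dot u w); rewrite ler_norml => /andP[_ le_re2].
have := norm_dot_le u w; lra.
Qed.

Lemma norm2Z k c (v : 'cV[F]_k) : norm2 (c *: v) = md c * norm2 v.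
Proof.
rewrite /vnorm2; under eq_bigr do rewrite mxE mdM exprMn.
by rewrite -mulr_sumr sqrtrM ?sqr_ge0 // sqrtr_sqr ger0_norm.
Qed.

Lemma norm20 k : norm2 (0 : 'cV[F]_k) = 0.
Proof. by rewrite /vnorm2 big1 ?sqrtr0 // => i _; rewrite mxE md0 expr0n. Qed.

Lemma norm2_sum k I (r : seq I) (P : pred I) (f : I -> 'cV[F]_k) :
  norm2 (\sum_(i <- r | P i) f i) <= \sum_(i <- r | P i) norm2 (f i).
Proof.
elim/big_ind2: _ => [|x1 y1 x2 y2 le1 le2|//]; first by rewrite norm20.
exact: le_trans (norm2D _ _) (lerD le1 le2).
Qed.

Lemma norm2_gt0 k (v : 'cV[F]_k) : v != 0 -> 0 < norm2 v.
Proof.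
move=> v_neq0; rewrite sqrtr_gt0 lt0r sqnorm_ge0 andbT.
apply: contraNneq v_neq0 => sq0.
apply/eqP/matrixP => i j; rewrite (ord1 j) mxE; apply/eqP; rewrite -md_eq0.
by rewrite -sqrf_eq0; apply/eqP/(psumr_eq0P _ sq0) => // l _; apply: sqr_ge0.
Qed.

Lemma md_le_norm2 k (v : 'cV[F]_k) i : md (v i 0) <= norm2 v.
Proof.
rewrite -[md _]ger0_norm // -sqrtr_sqr ler_sqrt ?sqnorm_ge0 //.
by rewrite [X in _ <= X](bigD1 i) //= lerDl; apply: sumr_ge0 => j _; apply: sqr_ge0.
Qed.

Lemma adjE m n (M : 'M[F]_(m, n)) i j : adj M i j = conj (M j i).
Proof. by rewrite !mxE. Qed.

Lemma adjM m n p (M : 'M[F]_(m, n)) (N : 'M[F]_(n, p)) :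
  adj (M *m N) = adj N *m adj M.
Proof.
apply/matrixP => i j; rewrite adjE !mxE (big_morph conj conjD conj0).
by apply: eq_bigr => l _; rewrite !adjE conjM mulrC.
Qed.

Lemma adjK m n (M : 'M[F]_(m, n)) : adj (adj M) = M.
Proof. by apply/matrixP => i j; rewrite !adjE conjK. Qed.

Lemma adjB m n (M N : 'M[F]_(m, n)) : adj (M - N) = adj M - adj N.
Proof. by apply/matrixP => i j; rewrite !mxE conjD conjN. Qed.

Lemma dot_mulmxr m n (u : 'cV[F]_m) (M : 'M[F]_(m, n)) (v : 'cV[F]_n) :
  dot u (M *m v) = dot (adj M *m u) v.
Proof.
rewrite /dot; under eq_bigr do rewrite mxE big_distrr.
rewrite exchange_big; apply: eq_bigr => l _.
rewrite mxE (big_morph conj conjD conj0) big_distrl; apply: eq_bigr => i _.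
by rewrite adjE conjM conjK /= mulrA [M i l * _]mulrC.
Qed.

Lemma mulmx_adj_eq0 m n (M : 'M[F]_(m, n)) : M *m adj M = 0 -> M = 0.
Proof.
move=> /matrixP MM0; apply/matrixP => i j; rewrite mxE; apply/eqP.
have /eqP : \sum_l md (M i l) ^+ 2 = 0.
  have MM0i : (M *m adj M) i i = 0 by rewrite MM0 mxE.
  apply: ofR_inj; rewrite ofR0 -MM0i (big_morph ofR ofRD ofR0) mxE.
  by apply: eq_bigr => l _; rewrite adjE mulf_conj.
rewrite psumr_eq0 => [/allP/(_ j (mem_index_enum _))|l _]; last exact: sqr_ge0.
by rewrite sqrf_eq0 md_eq0.
Qed.

Section GramPinv.
Variables (m n : nat) (B : 'M[F]_(m, n)) (X : 'M[F]_n).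
Hypothesis pinvX : is_MP_inverse conj (adj B *m B) X.

Lemma adj_gram : adj (adj B *m B) = adj B *m B.
Proof. by rewrite adjM adjK. Qed.

Lemma gram_pinv_adj : adj B *m B *m X *m adj B = adj B.
Proof.
case: pinvX => GXG _ _ _; set G := adj B *m B in GXG *.
set Z := adj B - G *m X *m adj B.
(* [Z *m B = 0] by the first Penrose equation, so [Z *m adj Z = 0] and [Z = 0]. *)
have ZB0 : Z *m B = 0 by rewrite mulmxBl -(mulmxA (G *m X)) GXG subrr.
have adjZ : adj Z = B - B *m (adj X *m G).
  by rewrite adjB (adjM (G *m X)) (adjM G X) adjK adj_gram.
have : Z *m adj Z = 0 by rewrite adjZ mulmxBr !mulmxA ZB0 !mul0mx subrr.
by move/mulmx_adj_eq0/eqP; rewrite subr_eq0 => /eqP.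
Qed.

Lemma pinv_mul_adj : X *m adj B = adj B *m (B *m adj X *m X *m adj B).
Proof.
case: pinvX => _ XGX _ XG_herm.
by rewrite -{1}XGX -XG_herm adjM adj_gram -!mulmxA.
Qed.

Lemma pinv_normal_eq (c : 'cV[F]_m) :
  adj B *m (B *m (X *m adj B *m c) - c) = 0.
Proof. by rewrite mulmxBr !mulmxA gram_pinv_adj subrr. Qed.

End GramPinv.

Lemma supp_subsetP n (S : {set 'I_n}) (v : 'cV[F]_n) :
  reflect (forall j, j \notin S -> v j 0 = 0) (supp v \subset S).
Proof.
apply: (iffP fintype.subsetP) => [vS j|v0 j].
  by apply: contraNeq => vj0; apply: vS; rewrite inE.
by rewrite inE; apply: contraR => /v0 ->.
Qed.

Definition vmask n (S : {set 'I_n}) (v : 'cV[F]_n) : 'cV[F]_n :=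
  \col_j (if j \in S then v j 0 else 0).

Lemma supp_subB n (S : {set 'I_n}) (u v : 'cV[F]_n) :
  supp u \subset S -> supp v \subset S -> supp (u - v) \subset S.
Proof.
move=> /supp_subsetP u0 /supp_subsetP v0; apply/supp_subsetP => j jS.
by rewrite !mxE u0 // v0 // subr0.
Qed.

Lemma supp_vmask n (S : {set 'I_n}) (v : 'cV[F]_n) : supp (vmask S v) \subset S.
Proof. by apply/supp_subsetP => j jS; rewrite mxE (negbTE jS). Qed.

Lemma vmask_split n (S : {set 'I_n}) (v : 'cV[F]_n) :
  v = vmask S v + vmask (~: S) v.
Proof.
apply/matrixP => j k; rewrite (ord1 k) !mxE inE.
by case: (j \in S); rewrite ?addr0 ?add0r.
Qed.

Lemma restrict_cols_mul m n (A : 'M[F]_(m, n)) (S : {set 'I_n}) (v : 'cV[F]_n) :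
  supp v \subset S -> restrict_cols A S *m v = A *m v.
Proof.
move=> /supp_subsetP v0; apply/matrixP => i k; rewrite (ord1 k) !mxE.
apply: eq_bigr => j _; rewrite mxE; case: ifPn => // /v0 ->.
by rewrite !mulr0.
Qed.

Lemma supp_adj_restrict_cols m n (A : 'M[F]_(m, n)) (S : {set 'I_n})
    (w : 'cV[F]_m) :
  supp (adj (restrict_cols A S) *m w) \subset S.
Proof.
apply/supp_subsetP => j jS; rewrite mxE big1 // => i _.
by rewrite adjE mxE (negbTE jS) conj0 mul0r.
Qed.

Lemma norm2_mul_le m n (A : 'M[F]_(m, n)) (v : 'cV[F]_n) :
  colnorm_le1 md A -> norm2 (A *m v) <= \sum_j md (v j 0).
Proof.
move=> A_col.
have -> : A *m v = \sum_j v j 0 *: col j A.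
  apply/matrixP => i k; rewrite (ord1 k) !mxE summxE.
  by apply: eq_bigr => j _; rewrite !mxE mulrC.
apply: le_trans (norm2_sum _ _ _) _; apply: ler_sum => j _.
rewrite norm2Z ler_piMr // /vnorm2.
by under eq_bigr do rewrite mxE; apply: A_col.
Qed.

Lemma beta_mul_le m n (A : 'M[F]_(m, n)) (k : nat) (v : 'cV[F]_n) :
  (Defs.card v <= k)%N -> beta md A k * norm2 v <= norm2 (A *m v).
Proof.
have [->|v_neq0 card_v] := eqVneq v 0.
  by rewrite mulmx0 !norm20 mulr0.
have v_gt0 := norm2_gt0 v_neq0.
rewrite -ler_pdivlMr //; apply: ge_inf; last by exists v.
by exists 0 => _ [x [_ _ ->]]; apply: divr_ge0; apply: norm2_ge0.
Qed.

Definition l1_outside n (S : {set 'I_n}) (h : 'cV[F]_n) : R :=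
  \sum_(j | j \notin S) md (h j 0).

Lemma l1_outsideE n (S : {set 'I_n}) (h : 'cV[F]_n) :
  l1_outside S h = \sum_j md (vmask (~: S) h j 0).
Proof.
rewrite /l1_outside big_mkcond; apply: eq_bigr => j _.
by rewrite mxE inE; case: (j \in S); rewrite ?md0.
Qed.

Lemma Q2cardE n mu (x : 'cV[F]_n) : Q2card md mu x = \sum_j Q2pen mu (md (x j 0)).
Proof. by []. Qed.

Lemma Q2card_shift_ge n mu (S : {set 'I_n}) (x h : 'cV[F]_n) :
  0 <= mu -> supp x \subset S ->
  (forall j, j \in S -> Num.sqrt mu <= md (x j 0)) ->
  (forall j, j \in S -> Num.sqrt mu <= md ((x + h) j 0)) ->
  Q2card md mu x + (Num.sqrt mu *+ 2 - norm2 h) * l1_outside S h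
    <= Q2card md mu (x + h).
Proof.
move=> mu_ge0 /supp_subsetP x0 x_big xh_big.
rewrite !Q2cardE /l1_outside mulr_sumr [X in _ + X <= _]big_mkcond -big_split /=.
apply: ler_sum => j _; case: (boolP (j \in S)) => jS /=.
  by rewrite addr0 !Q2pen_sat ?x_big ?xh_big.
rewrite mxE x0 // add0r md0 Q2pen0 // add0r.
apply: le_trans (Q2pen_ge mu_ge0 (md_ge0 _)).
by have := md_le_norm2 h j; have := md_ge0 (h j 0); nra.
Qed.

Lemma Kreg_gap_gt0 m n (A : 'M[F]_(m, n)) (S : {set 'I_n}) (h : 'cV[F]_n)
    (c : R) :
  0 < beta md A #|S| -> h != 0 -> norm2 h < c ->
  0 < l1_outside S h * (c - norm2 h) + sqnorm (A *m h).
Proof.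
move=> beta_gt0 h_neq0 h_lt_c.
have [T0|T_neq0] := eqVneq (l1_outside S h) 0.
  have hS : supp h \subset S.
    apply/supp_subsetP => j jS; apply/eqP; rewrite -md_eq0; apply/eqP.
    exact: (psumr_eq0P _ T0).
  rewrite T0 mul0r add0r -norm2_sqr exprn_gt0 //.
  apply: lt_le_trans (beta_mul_le A (subset_leq_card hS)).
  exact: mulr_gt0 beta_gt0 (norm2_gt0 h_neq0).
have T_gt0 : 0 < l1_outside S h by rewrite lt0r T_neq0 sumr_ge0.
by rewrite ltr_wpDr ?sqnorm_ge0 // mulr_gt0 // subr_gt0.
Qed.

Section Oracle.
Variables (m n : nat) (A : 'M[F]_(m, n)) (x0 : 'cV[F]_n) (eps : 'cV[F]_m)
  (X : 'M[F]_n).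
Local Notation S := (supp x0).
Local Notation AS := (restrict_cols A S).
Local Notation b := (A *m x0 + eps).
Local Notation x' := (X *m adj AS *m b).
Local Notation r := (A *m x' - b).
Hypothesis pinvX : is_MP_inverse conj (adj AS *m AS) X.

Lemma supp_oracle : supp x' \subset S.
Proof. by rewrite (pinv_mul_adj pinvX) -mulmxA supp_adj_restrict_cols. Qed.

Lemma residual_orth h : supp h \subset S -> dot r (A *m h) = 0.
Proof.
move=> hS; rewrite -(restrict_cols_mul A hS) dot_mulmxr.
by rewrite -(restrict_cols_mul A supp_oracle) pinv_normal_eq // dot0l.
Qed.

Lemma sqnorm_noise : sqnorm eps = sqnorm r + sqnorm (A *m (x0 - x')).
Proof.
have eps_eq : eps = - (r + A *m (x0 - x')).
  by rewrite mulmxBr addrC addrA subrK opprB addrC addKr.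
rewrite {1}eps_eq sqnormN sqnormD residual_orth ?re2_0 ?addr0 //.
by rewrite supp_subB ?supp_oracle.
Qed.

Lemma norm2_residual_le : norm2 r <= norm2 eps.
Proof. by rewrite norm2_le sqnorm_noise lerDl sqnorm_ge0. Qed.

Lemma oracle_error_le : 0 < beta md A #|S| ->
  norm2 (x' - x0) <= norm2 eps / beta md A #|S|.
Proof.
move=> beta_gt0; rewrite ler_pdivlMr // mulrC -norm2N opprB.
apply: le_trans (beta_mul_le A _) _.
  by rewrite subset_leq_card // supp_subB ?supp_oracle.
by rewrite norm2_le sqnorm_noise lerDr sqnorm_ge0.
Qed.

Lemma oracle_entry_gt mu : 0 < beta md A #|S| ->
  (forall j, j \in S -> Num.sqrt mu + norm2 eps / beta md A #|S| < md (x0 j 0)) ->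
  forall j, j \in S -> Num.sqrt mu < md (x' j 0).
Proof.
move=> beta_gt0 x0_big j jS.
have := md_le_norm2 (x0 - x') j; rewrite -norm2N opprB.
have := md_triangle (x' j 0) ((x0 - x') j 0); rewrite !mxE subrKC.
by have := oracle_error_le beta_gt0; have := x0_big j jS; lra.
Qed.

Lemma supp_oracle_eq mu : (forall j, j \in S -> Num.sqrt mu < md (x' j 0)) ->
  supp x' = S.
Proof.
move=> x'_big; apply/eqP; rewrite finset.eqEsubset supp_oracle.
apply/fintype.subsetP => j jS; rewrite inE -md_eq0 gt_eqF //.
exact: le_lt_trans (sqrtr_ge0 mu) (x'_big j jS).
Qed.

Lemma sqnorm_residual_shift h : colnorm_le1 md A ->
  sqnorm r + sqnorm (A *m h) - (norm2 eps * l1_outside S h) *+ 2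
    <= sqnorm (A *m (x' + h) - b).
Proof.
move=> A_col.
have -> : A *m (x' + h) - b = r + A *m h by rewrite mulmxDr addrAC.
suff : - ((norm2 eps * l1_outside S h) *+ 2) <= re2 (dot r (A *m h)).
  by rewrite (sqnormD r); lra.
have -> : dot r (A *m h) = dot r (A *m vmask (~: S) h).
  by rewrite {1}(vmask_split S h) (mulmxDr A) dotDr residual_orth ?supp_vmask ?add0r.
have := re2_le (dot r (A *m vmask (~: S) h)); rewrite ler_norml => /andP[+ _].
apply: le_trans; rewrite lerN2 ler_pMn2r //.
apply: le_trans (norm_dot_le _ _) _.
apply: ler_pM; rewrite ?norm2_ge0 ?norm2_residual_le //.
by rewrite l1_outsideE norm2_mul_le.
Qed.

Lemma oracle_strict_local_min mu : colnorm_le1 md A -> 0 < mu ->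
  0 < beta md A #|S| -> norm2 eps < Num.sqrt mu ->
  (forall j, j \in S -> Num.sqrt mu < md (x' j 0)) ->
  strict_local_min md (Kreg md A b mu) x'.
Proof.
move=> A_col mu_gt0 beta_gt0 eps_lt x'_big.
set s := Num.sqrt mu; set c := (s - norm2 eps) *+ 2.
(* on [S], [y] stays where the penalty is flat *)
exists (\big[Num.min/c]_(j in S) (md (x' j 0) - s)) => [|y y_neq h_lt].
  by apply/bigmin_gtP; split => [|j /x'_big]; rewrite ?pmulrn_lgt0 ?subr_gt0.
set h := y - x'; have yE : y = x' + h by rewrite addrC subrK.
have h_lt_c : norm2 h < c := lt_le_trans h_lt (bigmin_le_id _ _ _ _).
have y_big j : j \in S -> s <= md (y j 0).
  move=> jS; have := lt_le_trans h_lt (bigmin_le_cond _ _ jS).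
  have := md_le_norm2 (x' - y) j; rewrite -norm2N opprB -/h.
  have := md_triangle (y j 0) ((x' - y) j 0); rewrite !mxE subrKC.
  lra.
have x'_ge j : j \in S -> s <= md (x' j 0) by move/x'_big/ltW.
have := Q2card_shift_ge (h := h) (ltW mu_gt0) supp_oracle x'_ge.
rewrite -yE => /(_ y_big) Q_ge.
have := sqnorm_residual_shift h A_col; rewrite -yE => D_ge.
have := Kreg_gap_gt0 beta_gt0 _ h_lt_c; rewrite subr_eq0 => /(_ y_neq) gap.
by rewrite /Kreg !norm2_sqr; move: gap; rewrite /c /s; lra.
Qed.

End Oracle.

Theorem prop46_generic : prop46 conj md.
Proof.
move=> m n A mu x0 eps b X A_col mu_gt0 -> S K beta_gt0 eps_lt x0_big AS pinvX x'.
have x'_big := oracle_entry_gt pinvX beta_gt0 x0_big.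
split.
- exact: oracle_strict_local_min.
- exact: supp_oracle_eq x'_big.
- exact: x'_big.
- exact: norm2_residual_le.
- exact: oracle_error_le.
Qed.

End Scalars.

Lemma prop46_real (R : realType) : prop46 (F := R) id (@Num.norm _ R).
Proof.
apply: (@prop46_generic R R id _ id (fun x => x *+ 2)) => //.
- by move=> x; rewrite real_normK ?num_real // expr2.
- exact: normrM.
- exact: ler_normD.
- by move=> x; rewrite normrMn.
Qed.

Lemma prop46_complex (R : realType) :
  prop46 (F := R[i]) (@conjc R) (@Normc.normc R).
Proof.
apply: (@prop46_generic R R[i] (@conjc R) (@Normc.normc R) (fun r => (r%:C)%C)
  (fun x => complex.Re x *+ 2)).
- exact: rmorphD.
- exact: rmorphM.
- exact: conjcK.
- exact: rmorphD.
- exact: complexI.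
- by move=> x; rewrite -sqr_normc rmorphXn.
- by case=> a b; apply: sqrtr_ge0.
- exact: Normc.normcM.
- by move=> x y; rewrite -lecR rmorphD; exact: (ler_normD x y).
- by move=> x; rewrite addcJ rmorphMn mulr_natl.
- case=> a b /=; rewrite normrMn.
  have : `|a| <= Num.sqrt (a ^+ 2 + b ^+ 2).
    by rewrite -sqrtr_sqr ler_sqrt ?addr_ge0 ?sqr_ge0 // lerDl sqr_ge0.
  by rewrite !mulr2n; lra.
Qed.

Theorem proposition4p6 (R : realType) :
  prop46 (F := R) id (@Num.norm _ R) /\
  prop46 (F := R[i]) (@conjc R) (@Normc.normc R).
Proof. by split; [apply: prop46_real | apply: prop46_complex]. Qed.
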